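(* Define $d_1=d_2=5/36$ and, for $l\ge 2$, $d_{l+1} = d_l + \sum_{i=1}^{l-1} \frac{d_i d_{l-i}}{(l+1)\binom{l}{i}}$. Then $\frac{1}{2\pi}-d_l = O(1/l)$ as $l\to\infty$.
   Context: It is known (Wright; Voblyi) that $(d_l)$ is increasing and converges to $1/(2\pi)$. *)

From Stdlib Require Import Reals Lra Lia List.
Open Scope R_scope.

(* nth value (1-indexed) in a list; default 0 *)
Definition dget (s : list R) (i : nat) : R := nth (i - 1) s 0.

Definition dnext (s : list R) (l : nat) : R :=
  dget s l +
  fold_right Rplus 0
    (map (fun i => dget s i * dget s (l - i) / (INR (l + 1) * Binomial.C l i))
         (seq 1 (l - 1))).

Fixpoint dl_list (n : nat) : list R :=
  match n with
  | O => nil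
  | S O => (5/36) :: nil
  | S (S O) => (5/36) :: (5/36) :: nil
  | S ((S (S _)) as m) => let s := dl_list m in s ++ (dnext s m :: nil)
  end.

(* d l = d_l for l >= 1 (d 0 = 0 is an unused junk value). *)
Definition d (l : nat) : R := dget (dl_list l) l.

From Stdlib Require Import Reals Lra Lia List Factorial Nsatz.
From Coquelicot Require Import Coquelicot.
Open Scope R_scope.

(* With [e_i = i! d_i] the recursion becomes the convolution equation
   [e_(i+1) = (i+1) e_i + sum_(j <= i) e_j e_(i-j)] ([i >= 1], [e_0 = 0]), a discrete Riccati
   equation linearized by the sequence [v] with [v_0 = 1], [(n+1) v_(n+1) = (n^2 + n + e_1) v_n]:
   the convolution of [e] and [v] is [l v_l].  As all terms are nonnegative, [(k+1) v_(k+1) - e_(k+1)]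
   is a convolution tail, which [i! (k-i)! <= (k-1)!] bounds by [8 k!] once [d] and
   [w_k = v_(k+1) / k!] are at most 2; hence [0 <= w_k - d_(k+1) <= 8/(k+1)].
   Finally [w_k = (5/36) prod_(j=1..k) (j+1/6)(j+5/6) / (j(j+1))] equals
   [J_0(2k+2) / (2 PI J_(2/3)(2k+1))] for the Wallis-type integrals
   [J_c(n) = int_0^(PI/2) cos(c t) cos^n t dt], and elementary comparisons between these integrals
   give [|w_k - 1/(2 PI)| <= 1/(k+1)]. *)

Definition wallis (c : R) (n : nat) (t : R) : R := cos (c * t) * cos t ^ n.

Definition J (c : R) (n : nat) : R := RInt (wallis c n) 0 (PI / 2).

Lemma wallis_continuous c n t : continuous (wallis c n) t.
Proof.
  apply (ex_derive_continuous (V := R_NormedModule)). unfold wallis. auto_derive. auto.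
Qed.

Lemma ex_RInt_wallis c n : ex_RInt (wallis c n) 0 (PI / 2).
Proof.
  apply (ex_RInt_continuous (V := R_CompleteNormedModule)). intros. apply wallis_continuous.
Qed.

Lemma RInt_wallis_lin x y c m c' n :
  RInt (fun t => x * wallis c m t - y * wallis c' n t) 0 (PI / 2) = x * J c m - y * J c' n.
Proof.
  apply is_RInt_unique.
  exact (is_RInt_minus _ _ _ _ _ _
           (is_RInt_scal _ _ _ x _ (RInt_correct _ _ _ (ex_RInt_wallis c m)))
           (is_RInt_scal _ _ _ y _ (RInt_correct _ _ _ (ex_RInt_wallis c' n)))).
Qed.

Lemma wallis_lin_continuous x y c m c' n t :
  continuous (fun t => x * wallis c m t - y * wallis c' n t) t.
Proof.
  apply (ex_derive_continuous (V := R_NormedModule)). unfold wallis. auto_derive. auto.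
Qed.

Lemma ex_RInt_wallis_lin x y c m c' n :
  ex_RInt (fun t => x * wallis c m t - y * wallis c' n t) 0 (PI / 2).
Proof.
  apply (ex_RInt_continuous (V := R_CompleteNormedModule)). intros. apply wallis_lin_continuous.
Qed.

(* Integration by parts, via an explicit antiderivative vanishing at [0] and [PI/2]. *)
Lemma J_rec c n :
  ((INR n + 2) ^ 2 - c ^ 2) * J c (S (S n)) = (INR n + 2) * (INR n + 1) * J c n.
Proof.
  set (F t := (INR n + 2) * cos t ^ S n * sin t * cos (c * t) - c * cos t ^ S (S n) * sin (c * t)).
  assert (HF : forall t, is_derive F t
      (((INR n + 2) ^ 2 - c ^ 2) * wallis c (S (S n)) t - (INR n + 2) * (INR n + 1) * wallis c n t)).
  { intro t. unfold F, wallis. auto_derive; [auto|].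
    simpl pow. pose proof (sin2_cos2 t) as Hs. unfold Rsqr in Hs.
    change (match n with 0%nat => 1 | S _ => INR n + 1 end) with (INR (S n)).
    rewrite S_INR. generalize (cos t ^ n) (INR n) Hs. intros C N H. nsatz. }
  apply Rminus_diag_uniq. rewrite <- RInt_wallis_lin.
  rewrite (is_RInt_unique _ _ _ _ (is_RInt_derive F _ 0 (PI / 2) (fun t _ => HF t)
             (fun t _ => wallis_lin_continuous _ _ _ _ _ _ t))).
  unfold F, minus, plus, opp. simpl. rewrite cos_PI2, Rmult_0_r, sin_0. ring.
Qed.

Lemma J_0_0 : J 0 0 = PI / 2.
Proof.
  unfold J. rewrite (RInt_ext _ (fun _ => 1)).
  - rewrite RInt_const. unfold scal; simpl. unfold mult; simpl. ring.
  - intros t _. unfold wallis. rewrite Rmult_0_l, cos_0. simpl. ring.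
Qed.

Lemma J_0_rec n : (INR n + 2) * J 0 (S (S n)) = (INR n + 1) * J 0 n.
Proof.
  pose proof (J_rec 0 n) as H. pose proof (pos_INR n).
  apply (Rmult_eq_reg_l (INR n + 2)); [|lra]. lra.
Qed.

Lemma cos_in_01 t : 0 < t < PI / 2 -> 0 < cos t <= 1.
Proof. intros. split; [apply cos_gt_0; lra | apply COS_bound]. Qed.

Lemma J_0_pos n : 0 < J 0 n.
Proof.
  pose proof PI_RGT_0. apply RInt_gt_0; [lra| |intros; apply wallis_continuous].
  intros t Ht. unfold wallis. rewrite Rmult_0_l, cos_0, Rmult_1_l.
  apply pow_lt, cos_in_01, Ht.
Qed.

Lemma J_0_succ_le n : J 0 (S n) <= J 0 n.
Proof.
  pose proof PI_RGT_0. apply RInt_le; try apply ex_RInt_wallis; [lra|].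
  intros t Ht. unfold wallis. rewrite Rmult_0_l, cos_0. simpl.
  destruct (cos_in_01 t Ht). pose proof (pow_le (cos t) n ltac:(lra)). nra.
Qed.

Lemma J_le_J_0 c n : J c n <= J 0 n.
Proof.
  pose proof PI_RGT_0. apply RInt_le; try apply ex_RInt_wallis; [lra|].
  intros t Ht. unfold wallis. rewrite Rmult_0_l, cos_0.
  destruct (cos_in_01 t Ht). pose proof (pow_le (cos t) n ltac:(lra)).
  pose proof (COS_bound (c * t)). nra.
Qed.

(* [cos (2t/3) = 1 - 2 sin^2 (t/3) >= 1 - 2 sin^2 t = 2 cos^2 t - 1] on [0, PI/2]. *)
Lemma J_two_thirds_lower n : INR n * J 0 n <= (INR n + 2) * J (2 / 3) n.
Proof.
  pose proof PI_RGT_0. pose proof (pos_INR n).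
  assert (Hcomb : 2 * J 0 (S (S n)) - 1 * J 0 n <= J (2 / 3) n).
  { rewrite <- RInt_wallis_lin. apply RInt_le; [lra|apply ex_RInt_wallis_lin|apply ex_RInt_wallis|].
    intros t Ht. unfold wallis. rewrite Rmult_0_l, cos_0.
    destruct (cos_in_01 t Ht). pose proof (pow_le (cos t) n ltac:(lra)).
    replace (2 / 3 * t) with (2 * (t / 3)) by field. rewrite cos_2a_sin.
    assert (0 <= sin (t / 3) <= sin t) by (split; [apply sin_ge_0 | apply sin_incr_1]; lra).
    pose proof (sin2_cos2 t) as Hs. unfold Rsqr in Hs. simpl pow.
    assert (sin (t / 3) * sin (t / 3) <= sin t * sin t) by nra.
    nra. }
  pose proof (J_0_rec n). nra.
Qed.

Lemma J_two_thirds_1 : J (2 / 3) 1 = 9 / 10.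
Proof.
  assert (D : forall t, is_derive (fun t => 3 / 10 * sin (5 / 3 * t) + 3 / 2 * sin (t / 3)) t
                (wallis (2 / 3) 1 t)).
  { intro t. auto_derive; [auto|]. unfold wallis.
    replace (5 / 3 * t) with (t + 2 / 3 * t) by field.
    replace (t * / 3) with (t - 2 / 3 * t) by field.
    rewrite cos_plus, cos_minus. simpl. field. }
  unfold J. rewrite (is_RInt_unique _ _ _ _ (is_RInt_derive _ _ 0 (PI / 2) (fun t _ => D t)
     (fun t _ => wallis_continuous _ _ t))).
  unfold minus, plus, opp; simpl.
  replace (5 / 3 * (PI / 2)) with (PI - PI / 6) by field. rewrite sin_PI_x.
  replace (PI / 2 / 3) with (PI / 6) by field. rewrite sin_PI6.
  rewrite Rmult_0_r, !sin_0. replace (0 / 3) with 0 by field. rewrite sin_0. field.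
Qed.

Fixpoint w (k : nat) : R :=
  match k with
  | O => 5 / 36
  | S k => w k * ((INR k + 1) ^ 2 + (INR k + 1) + 5 / 36) / ((INR k + 1) * (INR k + 2))
  end.

(* With [n = 2k+1], [(n+2)^2 - (2/3)^2 = 4 (k+7/6)(k+11/6)] and
   [(k+1)^2 + (k+1) + 5/36 = (k+7/6)(k+11/6)], so both sides obey the same recursion. *)
Lemma w_wallis_ratio k : w k * J (2 / 3) (S (2 * k)) = J 0 (S (S (2 * k))) / (2 * PI).
Proof.
  pose proof PI_RGT_0 as Hpi.
  induction k as [|k IH].
  - simpl. rewrite J_two_thirds_1. pose proof (J_0_rec 0) as H0. rewrite J_0_0 in H0. simpl in H0.
    replace (J 0 2) with (PI / 4) by lra. field. lra.
  - replace (2 * S k)%nat with (S (S (2 * k))) by lia.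
    set (n := S (2 * k)). pose proof (pos_INR k) as Hk.
    assert (Hn : INR n = 2 * INR k + 1) by (unfold n; rewrite S_INR, mult_INR; simpl; ring).
    pose proof (J_rec (2 / 3) n) as H23. pose proof (J_0_rec (S n)) as H0.
    rewrite S_INR, Hn in H0. rewrite Hn in H23.
    assert (E23 : J (2 / 3) (S (S n)) =
      (2 * INR k + 3) * (2 * INR k + 2) / ((2 * INR k + 3) ^ 2 - (2 / 3) ^ 2) * J (2 / 3) n).
    { apply (Rmult_eq_reg_l ((2 * INR k + 3) ^ 2 - (2 / 3) ^ 2)); [|nra].
      replace (2 * INR k + 3) with (2 * INR k + 1 + 2) by ring. rewrite H23. field. nra. }
    assert (E0 : J 0 (S (S (S n))) = (2 * INR k + 3) / (2 * INR k + 4) * J 0 (S n)).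
    { apply (Rmult_eq_reg_l (2 * INR k + 4)); [|lra].
      replace (2 * INR k + 4) with (2 * INR k + 1 + 1 + 2) at 1 by ring. rewrite H0. field. lra. }
    simpl w. rewrite E23, E0.
    replace (J 0 (S n)) with (w k * J (2 / 3) n * (2 * PI)) by (unfold n; rewrite IH; field; lra).
    field. repeat split; nra.
Qed.

Lemma w_scaled_bounds k :
  2 * INR k + 2 <= (2 * INR k + 3) * (2 * PI * w k) /\ (2 * INR k + 1) * (2 * PI * w k) <= 2 * INR k + 3.
Proof.
  pose proof PI_RGT_0. pose proof (pos_INR k).
  set (n := S (2 * k)).
  assert (Hn : INR n = 2 * INR k + 1) by (unfold n; rewrite S_INR, mult_INR; simpl; ring).
  pose proof (w_wallis_ratio k) as Hw. fold n in Hw.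
  pose proof (J_0_pos n). pose proof (J_0_succ_le n). pose proof (J_0_succ_le (S n)).
  pose proof (J_0_rec n). pose proof (J_two_thirds_lower n). pose proof (J_le_J_0 (2 / 3) n).
  rewrite Hn in *.
  assert (Hb : 0 < J (2 / 3) n) by nra.
  assert (Ha1 : 2 * PI * w k * J (2 / 3) n = J 0 (S n)) by (rewrite Rmult_assoc, Hw; field; lra).
  split; apply (Rmult_le_reg_r (J (2 / 3) n)); trivial; rewrite Rmult_assoc, Ha1.
  - apply Rle_trans with ((2 * INR k + 3) * J 0 (S (S n))); [|apply Rmult_le_compat_l; lra].
    apply Rle_trans with ((2 * INR k + 2) * J 0 n); [apply Rmult_le_compat_l; lra | lra].
  - apply Rle_trans with ((2 * INR k + 1) * J 0 n); [apply Rmult_le_compat_l; lra | lra].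
Qed.

Lemma w_near_inv_2PI k : Rabs (w k - 1 / (2 * PI)) <= 1 / (INR k + 1).
Proof.
  destruct (w_scaled_bounds k) as [Hlo Hup]. pose proof PI_RGT_0. pose proof PI2_1. pose proof (pos_INR k).
  set (x := 2 * PI * w k) in *.
  replace (w k - 1 / (2 * PI)) with ((x - 1) / (2 * PI)) by (unfold x; field; lra).
  rewrite Rabs_div, (Rabs_right (2 * PI)) by lra.
  assert (Hx : Rabs (x - 1) * (INR k + 1) <= 2).
  { destruct (Rle_dec 1 x); [rewrite Rabs_right by lra | rewrite Rabs_left by lra]; nra. }
  apply Rmult_le_reg_r with (2 * PI * (INR k + 1)); [nra|].
  replace (Rabs (x - 1) / (2 * PI) * (2 * PI * (INR k + 1))) with (Rabs (x - 1) * (INR k + 1))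
    by (field; lra).
  replace (1 / (INR k + 1) * (2 * PI * (INR k + 1))) with (2 * PI) by (field; lra).
  lra.
Qed.

Lemma w_le_2 k : w k <= 2.
Proof.
  pose proof (w_near_inv_2PI k) as H. apply Rabs_le_between in H.
  pose proof PI2_1. pose proof (pos_INR k).
  assert (1 / (2 * PI) <= 1) by (apply Rmult_le_reg_l with (2 * PI); [lra|]; field_simplify; lra).
  assert (1 / (INR k + 1) <= 1).
  { unfold Rdiv. rewrite Rmult_1_l, <- Rinv_1. apply Rinv_le_contravar; lra. }
  lra.
Qed.

Lemma dl_list_length n : length (dl_list n) = n.
Proof.
  induction n as [|[|[|k]] IH]; simpl; auto.
  rewrite length_app in *. simpl in *. rewrite IH. lia.
Qed.

Lemma nth_dl_list_S n j : (j < n)%nat -> nth j (dl_list (S n)) 0 = nth j (dl_list n) 0.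
Proof.
  intros H. destruct n as [|[|k]]; try lia.
  - destruct j; [reflexivity | lia].
  - apply app_nth1. rewrite dl_list_length. exact H.
Qed.

Lemma dget_dl_list m i : (1 <= i <= m)%nat -> dget (dl_list m) i = d i.
Proof.
  intros [H1 H2]. unfold d, dget. induction H2; auto.
  rewrite nth_dl_list_S by lia. exact IHle.
Qed.

Lemma d_rec m : (1 <= m)%nat -> d (S m) = d m +
  fold_right Rplus 0
    (map (fun i => d i * d (m - i) / (INR (m + 1) * Binomial.C m i)) (seq 1 (m - 1))).
Proof.
  intros Hm. destruct m as [|[|k]]; try lia.
  - unfold d, dget. simpl. ring.
  - unfold d at 1, dget at 1.
    change (dl_list (S (S (S k)))) with
      (dl_list (S (S k)) ++ dnext (dl_list (S (S k))) (S (S k)) :: nil).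
    rewrite app_nth2 by (rewrite dl_list_length; lia).
    rewrite dl_list_length. replace (S (S (S k)) - 1 - S (S k))%nat with 0%nat by lia.
    unfold nth, dnext.
    rewrite dget_dl_list by lia. f_equal. f_equal.
    apply map_ext_in. intros i Hi. apply in_seq in Hi.
    rewrite !dget_dl_list by lia. reflexivity.
Qed.

Lemma fold_right_Rplus_map_scal (K : R) (F : nat -> R) (s : list nat) :
  K * fold_right Rplus 0 (map F s) = fold_right Rplus 0 (map (fun i => K * F i) s).
Proof. induction s as [|i s IH]; simpl; [ring|]. rewrite <- IH. ring. Qed.

(* Scaling by [i!] turns the binomial weights of the recursion into a plain Cauchy product. *)
Definition e (i : nat) : R := INR (fact i) * d i.

Lemma e_0 : e 0 = 0.
Proof. unfold e, d, dget. simpl. ring. Qed.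

Lemma e_1 : e 1 = 5 / 36.
Proof. unfold e, d, dget. simpl. ring. Qed.

Lemma e_rec m : (1 <= m)%nat -> e (S m) = INR (S m) * e m +
  fold_right Rplus 0 (map (fun i => e i * e (m - i)) (seq 1 (m - 1))).
Proof.
  intros Hm. unfold e at 1. rewrite d_rec by exact Hm.
  assert (Hfact : INR (fact (S m)) = INR (S m) * INR (fact m)) by (rewrite <- mult_INR; reflexivity).
  rewrite Rmult_plus_distr_l. f_equal.
  - unfold e. rewrite Hfact. ring.
  - rewrite fold_right_Rplus_map_scal. f_equal. apply map_ext. intro i.
    unfold e, Binomial.C. rewrite Hfact. replace (m + 1)%nat with (S m) by lia.
    pose proof (INR_fact_neq_0 m). pose proof (INR_fact_neq_0 i). pose proof (INR_fact_neq_0 (m - i)).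
    assert (INR (S m) <> 0) by (apply not_0_INR; lia).
    field. auto.
Qed.

Definition v (n : nat) : R := match n with O => 1 | S k => INR (fact k) * w k end.

Lemma v_0 : v 0 = 1.
Proof. reflexivity. Qed.

Lemma v_rec n : INR (S n) * v (S n) = (INR n * INR n + INR n + 5 / 36) * v n.
Proof.
  destruct n as [|k]; cbn [v]; [simpl; ring|].
  rewrite fact_simpl, mult_INR. simpl w. rewrite !S_INR. pose proof (pos_INR k).
  field. lra.
Qed.

Module CauchyProduct.
From mathcomp Require Import all_boot all_order all_algebra ring.
From mathcomp Require Import Rstruct.
Import Order.TTheory GRing.Theory Num.Theory.
Local Open Scope ring_scope.

Section Convolution.
Context {R : comNzRingType}.

Definition conv (a b : nat -> R) (n : nat) : R := \sum_(j < n.+1) a j * b (n - j)%N.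

Lemma conv_coef_poly (a b : nat -> R) {N k} : (k < N)%N ->
  conv a b k = ((\poly_(i < N) a i) * \poly_(i < N) b i)`_k.
Proof.
move=> ltkN; rewrite coefM; apply: eq_bigr => j _.
have ltjN : (j < N)%N by apply: leq_ltn_trans ltkN; rewrite -ltnS.
have ltkjN : (k - j < N)%N by apply: leq_ltn_trans ltkN; apply: leq_subr.
by rewrite !coef_poly ltjN ltkjN.
Qed.

Lemma conv_assoc a b c n : conv (conv a b) c n = conv a (conv b c) n.
Proof.
pose P f := \poly_(i < n.+1) f i : {poly R}.
have coefP f j : (j < n.+1)%N -> (P f)`_j = f j by move=> ltjn; rewrite coef_poly ltjn.
have ltnjn (j : 'I_n.+1) : (n - j < n.+1)%N by rewrite ltnS leq_subr.
transitivity ((P a * P b * P c)`_n).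
  rewrite coefM; apply: eq_bigr => j _.
  by rewrite (conv_coef_poly _ _ (ltn_ord j)) (coefP _ _ (ltnjn j)).
rewrite -mulrA coefM; apply: eq_bigr => j _.
by rewrite (conv_coef_poly _ _ (ltnjn j)) (coefP _ _ (ltn_ord j)).
Qed.

Section Riccati.
Context {e v : nat -> R}.
Hypothesis e_0 : e 0 = 0.
Hypothesis e_rec : forall i, (0 < i)%N -> e i.+1 = i.+1%:R * e i + conv e e i.
Hypothesis v_rec : forall n, n.+1%:R * v n.+1 = (n%:R * n%:R + n%:R + e 1) * v n.

Lemma riccati_rec_all i : e i.+1 = i.+1%:R * e i + conv e e i + (if i == 0 then e 1 else 0).
Proof.
case: i => [|i] /=; last by rewrite e_rec // addr0.
by rewrite /conv big_ord1 e_0; ring.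
Qed.

(* Coefficientwise form of [E = x V' / V] for the generating series [E] of [e] and [V] of [v]. *)
Lemma riccati_linearization l : conv e v l = l%:R * v l.
Proof.
elim/ltn_ind: l => -[_|l IH]; first by rewrite /conv big_ord1 e_0 !mul0r.
rewrite /conv big_ord_recl e_0 mul0r add0r.
under eq_bigr => i _ do rewrite lift0 subSS riccati_rec_all !mulrDl.
rewrite !big_split /=.
have -> : \sum_(i < l.+1) (if i == 0 :> nat then e 1 else 0) * v (l - i)%N = e 1 * v l.
  by rewrite big_ord_recl subn0 big1 ?addr0 // => i _; rewrite mul0r.
have -> : \sum_(i < l.+1) conv e e i * v (l - i)%N = \sum_(i < l.+1) (l - i)%:R * e i * v (l - i)%N.
  rewrite -[LHS]/(conv (conv e e) v l) conv_assoc; apply: eq_bigr => i _.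
  by rewrite IH ?ltnS ?leq_subr // mulrA [e i * _]mulrC.
rewrite -big_split /=.
have -> : \sum_(i < l.+1) (i.+1%:R * e i * v (l - i)%N + (l - i)%:R * e i * v (l - i)%N)
    = l.+1%:R * conv e v l.
  rewrite /conv mulr_sumr; apply: eq_bigr => i _.
  have le_il : (i <= l)%N by rewrite -ltnS.
  by rewrite -!mulrDl -natrD addSn subnKC // mulrA.
rewrite IH // v_rec; ring.
Qed.

End Riccati.
End Convolution.

Lemma fact_mul_le_fact_pred i k : (0 < i < k)%N -> (i`! * (k - i)`! <= k.-1`!)%N.
Proof.
elim: k => [|k IH] /andP[i_gt0 lt_ik] //.
have [-> | ne_ik] := eqVneq i k; first by rewrite subSnn muln1.
have lt_ik' : (i < k)%N by rewrite ltn_neqAle ne_ik -ltnS.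
have -> : k`! = (k * k.-1`!)%N by case: k lt_ik' {IH lt_ik ne_ik}.
rewrite subSn ?(ltnW lt_ik') // factS mulnCA leq_mul //.
  by rewrite ltn_subrL i_gt0 (ltn_trans i_gt0 lt_ik').
by apply: IH; rewrite i_gt0 lt_ik'.
Qed.

Section RiccatiBounds.
Context {R : numDomainType} {e v : nat -> R} {B : R}.
Hypothesis e_0 : e 0 = 0.
Hypothesis e_rec : forall i, (0 < i)%N -> e i.+1 = i.+1%:R * e i + conv e e i.
Hypothesis v_0 : v 0 = 1.
Hypothesis v_rec : forall n, n.+1%:R * v n.+1 = (n%:R * n%:R + n%:R + e 1) * v n.
Hypothesis e_1_ge0 : 0 <= e 1.
Hypothesis v_le : forall n, v n.+1 <= B * n`!%:R.

Lemma riccati_ge0 i : 0 <= e i.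
Proof.
elim/ltn_ind: i => -[|i] IH; first by rewrite e_0.
rewrite (riccati_rec_all e_0 e_rec) !addr_ge0 //.
- by rewrite mulr_ge0 ?IH.
- by apply: sumr_ge0 => j _; rewrite mulr_ge0 ?IH // ltnS ?leq_subr // -ltnS.
- by case: (i == 0).
Qed.

Lemma linearizer_ge0 n : 0 <= v n.
Proof.
elim: n => [|n IH]; first by rewrite v_0.
rewrite -(pmulr_rge0 _ (ltr0Sn R n)) v_rec mulr_ge0 // !addr_ge0 ?mulr_ge0 //.
Qed.

Lemma riccati_defect_eq k : k.+1%:R * v k.+1 - e k.+1 = \sum_(i < k.+1) e i * v (k.+1 - i)%N.
Proof.
rewrite -(riccati_linearization e_0 e_rec v_rec) /conv big_ord_recr /= subnn v_0 mulr1.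
by rewrite addrK.
Qed.

Lemma bound_ge0 : 0 <= B.
Proof. by have := v_le 0; rewrite mulr1; apply: le_trans; apply: linearizer_ge0. Qed.

Lemma riccati_le i : e i <= B * i`!%:R.
Proof.
case: i => [|k]; first by rewrite e_0 mulr1 bound_ge0.
have : 0 <= k.+1%:R * v k.+1 - e k.+1.
  by rewrite riccati_defect_eq; apply: sumr_ge0 => i _; rewrite mulr_ge0 ?riccati_ge0 ?linearizer_ge0.
rewrite subr_ge0 => /le_trans; apply.
by rewrite factS natrM mulrCA ler_wpM2l.
Qed.

Lemma riccati_defect_le k : \sum_(i < k.+1) e i * v (k.+1 - i)%N <= 2 * B ^+ 2 * k`!%:R.
Proof.
have B2_ge0 : 0 <= B ^+ 2 by rewrite exprn_ge0 ?bound_ge0.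
have term_le i : (i < k)%N -> e i * v (k.+1 - i)%N <= B ^+ 2 * k.-1`!%:R.
  case: i => [_|i lt_ik]; first by rewrite e_0 mul0r mulr_ge0.
  rewrite subSn ?(ltnW lt_ik) //.
  apply: le_trans (ler_pM (riccati_ge0 _) (linearizer_ge0 _) (riccati_le _) (v_le _)) _.
  rewrite mulrACA -natrM -expr2 ler_wpM2l // ler_nat.
  by apply: fact_mul_le_fact_pred; rewrite lt_ik.
have init_le : \sum_(i < k) e i * v (k.+1 - i)%N <= B ^+ 2 * k`!%:R.
  apply: (@le_trans _ _ (\sum_(i < k) B ^+ 2 * k.-1`!%:R)).
    by apply: ler_sum => i _; apply: term_le.
  rewrite sumr_const card_ord -mulrnAr ler_wpM2l // -mulr_natr -natrM ler_nat.
  by case: k {term_le} => // k; rewrite factS mulnC.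
have last_le : e k * v 1 <= B ^+ 2 * k`!%:R.
  apply: le_trans (ler_pM (riccati_ge0 _) (linearizer_ge0 _) (riccati_le _) (v_le 0)) _.
  by rewrite fact0 mulr1n mulr1 mulrAC -expr2.
by rewrite big_ord_recr /= subSnn -mulrA mulr_natl mulr2n lerD.
Qed.

Lemma riccati_defect_bounds k : 0 <= k.+1%:R * v k.+1 - e k.+1 <= 2 * B ^+ 2 * k`!%:R.
Proof.
rewrite riccati_defect_eq riccati_defect_le andbT.
by apply: sumr_ge0 => i _; rewrite mulr_ge0 ?riccati_ge0 ?linearizer_ge0.
Qed.

End RiccatiBounds.

Lemma fold_right_Rplus_seq (F : nat -> R) a n :
  fold_right Rplus 0 (map F (List.seq a n)) = \sum_(i < n) F (a + i)%N.
Proof.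
elim: n a => [|n IH] a; first by rewrite big_ord0.
by rewrite /= IH big_ord_recl addn0; congr (_ + _); apply: eq_bigr => i _; rewrite addSnnS.
Qed.

Lemma e_conv_rec i : (0 < i)%N -> e i.+1 = i.+1%:R * e i + conv e e i.
Proof.
case: i => // m _; rewrite e_rec; last by lia.
rewrite INRE fold_right_Rplus_seq /conv big_ord_recl e_0 mul0r add0r big_ord_recr /=.
by rewrite subnn e_0 mulr0 addr0 Nat.sub_0_r.
Qed.

Lemma v_conv_rec n : n.+1%:R * v n.+1 = (n%:R * n%:R + n%:R + e 1) * v n.
Proof. by rewrite e_1 -!INRE; apply: v_rec. Qed.

Lemma e_1_ge0 : 0 <= e 1.
Proof. by rewrite e_1 !RealsE divr_ge0 ?ler0n. Qed.

Lemma v_le n : v n.+1 <= 2 * n`!%:R.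
Proof.
rewrite /= INRE factE RmultE mulrC ler_wpM2r ?ler0n //.
by have /RleP := w_le_2 n; rewrite IZRposE INRE.
Qed.

Local Close Scope ring_scope.

Lemma w_sub_d_bounds k : 0 <= w k - d (S k) <= 8 / INR (S k).
Proof.
have := riccati_defect_bounds e_0 e_conv_rec v_0 v_conv_rec e_1_ge0 v_le k.
have -> : (k.+1%:R * v k.+1 - e k.+1 = k.+1%:R * k`!%:R * (w k - d k.+1))%R.
  by rewrite /v /e !RealsE factS natrM mulrA -mulrBr.
have -> : (2 * 2 ^+ 2 * k`!%:R = 8 * k`!%:R :> R)%R by rewrite -natrX -natrM.
have fact_gt0 : (0 < k`!%:R :> R)%R by rewrite ltr0n fact_gt0.
move=> /andP[lo hi]; split; apply/RleP; rewrite !RealsE.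
- by rewrite -(pmulr_rge0 _ (mulr_gt0 (ltr0Sn R k) fact_gt0)).
- rewrite ler_pdivlMr ?ltr0Sn // -(ler_pM2r fact_gt0).
  by rewrite -mulrA [leLHS]mulrC.
Qed.

End CauchyProduct.

Theorem lemma4p1 :
  exists (K : R) (N : nat), forall l : nat, (N <= l)%nat ->
    Rabs (1 / (2 * PI) - d l) <= K / INR l.
Proof.
  exists 9, 1%nat. intros l Hl. destruct l as [|k]; [lia|].
  destruct (CauchyProduct.w_sub_d_bounds k) as [Hlo Hhi].
  pose proof (w_near_inv_2PI k) as Hw. rewrite S_INR in *. pose proof (pos_INR k).
  replace (1 / (2 * PI) - d (S k)) with ((w k - d (S k)) - (w k - 1 / (2 * PI))) by ring.
  eapply Rle_trans; [apply Rabs_triang|].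
  rewrite Rabs_Ropp, (Rabs_right (w k - d (S k))) by lra.
  replace (9 / (INR k + 1)) with (8 / (INR k + 1) + 1 / (INR k + 1)) by (field; lra).
  lra.
Qed.
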